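(* Let $\lambda_1\ge\lambda_2\ge\cdots\ge\lambda_d>0$, $k\in[d]$, and $c\in(0,1)$. Then $$\frac1k\sum_{i=k+1}^d\lambda_i\le\Big(\frac1k\sum_{i=1}^d\lambda_i^c\Big)^{1/c}.$$ *)

From mathcomp Require Import all_boot all_order all_algebra.
From mathcomp Require Import all_classical all_reals all_analysis.

From mathcomp Require Import all_boot all_order all_algebra.
From mathcomp Require Import all_classical all_reals all_analysis.
Import Order.TTheory GRing.Theory Num.Theory.
Set Implicit Arguments.
Unset Strict Implicit.
Local Open Scope ring_scope.

(* Put m := ((1/k) sum_i lam_i^c)^(1/c).  A tail term lam_i (i > k) is at most
   each of lam_1, ..., lam_k, so k lam_i^c <= sum_j lam_j^c, i.e. lam_i <= m.
   Hence lam_i = lam_i^c lam_i^(1-c) <= lam_i^c m^(1-c), and summing over the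
   tail gives at most m^(1-c) k m^c = k m. *)

Section PowR.
Variable R : realType.
Implicit Types x y m c : R.

Lemma powRKV x c : 0 <= x -> c != 0 -> (x `^ c) `^ c^-1 = x.
Proof. by move=> x0 c0; rewrite -powRrM mulfV // powRr1. Qed.

Lemma powRVK x c : 0 <= x -> c != 0 -> (x `^ c^-1) `^ c = x.
Proof. by move=> x0 c0; rewrite -powRrM mulVf // powRr1. Qed.

Lemma le_powRV x y c : 0 < c -> 0 <= x -> x `^ c <= y -> x <= y `^ c^-1.
Proof.
move=> c0 x0 xy; rewrite -(powRKV x0 (lt0r_neq0 c0)).
apply: ge0_ler_powR; rewrite ?nnegrE ?invr_ge0 ?powR_ge0 ?(ltW c0) //.
exact: le_trans (powR_ge0 _ _) xy.
Qed.

Lemma le_powR_mul_powR1B x m c :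
  0 <= x -> x <= m -> c <= 1 -> x <= x `^ c * m `^ (1 - c).
Proof.
rewrite le_eqVlt => /predU1P[<- _ _|x0 xm c1]; first by rewrite mulr_ge0 ?powR_ge0.
have xE : x = x `^ c * x `^ (1 - c).
  by rewrite -powRD ?(gt_eqF x0) ?implybT // addrC subrK powRr1 // ltW.
rewrite [X in X <= _]xE ler_wpM2l ?powR_ge0 //.
apply: ge0_ler_powR; rewrite ?nnegrE ?subr_ge0 ?(ltW x0) //.
exact: le_trans (ltW x0) xm.
Qed.

Lemma sum_le_powR_sum (I : eqType) (r : seq I) (P : pred I) (f : I -> R) m c :
  c <= 1 -> {in r, forall i, P i -> 0 <= f i <= m} ->
  \sum_(i <- r | P i) f i <= m `^ (1 - c) * \sum_(i <- r | P i) f i `^ c.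
Proof.
move=> c1 f0m; rewrite mulr_sumr !(big_seq_cond (fun i => P i)) ler_sum //.
move=> i /andP[ir Pi]; have /andP[fi0 fim] := f0m i ir Pi.
by rewrite mulrC le_powR_mul_powR1B.
Qed.

End PowR.

Section NonincreasingSequence.
Variables (R : realType) (d : nat) (lam : nat -> R).
Hypothesis lam_noninc :
  forall i j : nat, (1 <= i)%N -> (i <= j)%N -> (j <= d)%N -> lam j <= lam i.
Hypothesis lam_ge0 : forall i : nat, (1 <= i)%N -> (i <= d)%N -> 0 <= lam i.

Lemma powR_tail_le_mean k (c : R) i : (0 < k)%N -> 0 <= c -> (k < i <= d)%N ->
  lam i `^ c <= k%:R^-1 * \sum_(1 <= j < d.+1) lam j `^ c.
Proof.
move=> k0 c0 /andP[ki id]; have kd : (k <= d)%N by rewrite ltnW ?(leq_trans ki).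
rewrite ler_pdivlMl ?ltr0n // (big_cat_nat _ (n := k.+1)) //=.
rewrite -[X in X <= _]addr0 lerD ?sumr_ge0 // => [|j _]; last exact: powR_ge0.
have -> : k%:R * lam i `^ c = \sum_(1 <= j < k.+1) lam i `^ c.
  by rewrite sumr_const_nat subn1 mulr_natl.
rewrite ler_sum_nat // => j /andP[j1]; rewrite ltnS => jk.
have ji : (j <= i)%N := leq_trans jk (ltnW ki).
apply: ge0_ler_powR; rewrite ?nnegrE ?lam_ge0 ?(leq_trans j1 ji) ?(leq_trans ji id) //.
exact: lam_noninc.
Qed.

End NonincreasingSequence.

Theorem lemma4p11 (R : realType) (d k : nat) (lam : nat -> R) (c : R)
  (hmono : forall i j : nat, (1 <= i)%N -> (i <= j)%N -> (j <= d)%N -> lam j <= lam i)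
  (hpos : forall i : nat, (1 <= i)%N -> (i <= d)%N -> 0 < lam i)
  (hk1 : (1 <= k)%N) (hkd : (k <= d)%N)
  (hc0 : 0 < c) (hc1 : c < 1) :
  k%:R^-1 * (\sum_(k.+1 <= i < d.+1) lam i)
  <= powR (k%:R^-1 * (\sum_(1 <= i < d.+1) powR (lam i) c)) c^-1.
Proof.
have lam_ge0 i : (1 <= i)%N -> (i <= d)%N -> 0 <= lam i.
  by move=> i1 id; exact/ltW/hpos.
have k_gt0 : (0 : R) < k%:R by rewrite ltr0n.
set S := \sum_(1 <= i < d.+1) lam i `^ c.
have S_ge0 : 0 <= S by apply: sumr_ge0 => i _; exact: powR_ge0.
set m := (k%:R^-1 * S) `^ c^-1.
have tail_le_m : {in index_iota k.+1 d.+1, forall i, true -> 0 <= lam i <= m}.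
  move=> i; rewrite mem_index_iota => /andP[ki id] _.
  have i1 := leq_trans hk1 (ltnW ki).
  rewrite lam_ge0 //=; apply: le_powRV => //; first exact: lam_ge0.
  by rewrite /S (powR_tail_le_mean hmono lam_ge0 hk1 (ltW hc0)) ?ki.
have S_eq : S = k%:R * m `^ c.
  by rewrite /m powRVK ?gt_eqF // ?mulVKf ?gt_eqF // mulr_ge0 // invr_ge0 ltW.
have tail_le_S : \sum_(k.+1 <= i < d.+1) lam i `^ c <= S.
  rewrite /S [X in _ <= X](big_cat_nat _ (n := k.+1)) //= lerDr sumr_ge0 // => i _.
  exact: powR_ge0.
rewrite ler_pdivrMl // (le_trans (sum_le_powR_sum (ltW hc1) tail_le_m)) //.
rewrite (le_trans (ler_wpM2l (powR_ge0 _ _) tail_le_S)) // S_eq mulrCA.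
by rewrite -powRD ?subrK ?oner_eq0 // powRr1 // powR_ge0.
Qed.
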